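(* Consider the distributed peeling protocol described in the context, run in the synchronous phase model described in the context. Then: (i) for $k$-core mining (threshold $k(v)=k$ for all $v$) on a graph $G=(V,E)$ with $k\le |V|$, the protocol converges in no more than $|V|-k$ phases; (ii) for $(k_1,k_2)$-core mining (threshold $k(v)=k_i$ for $v\in V_i$) on a bipartite graph $G=(V_1,V_2,E)$, it converges in no more than $(|V_1|-k_2)+(|V_2|-k_1)+1$ phases; (iii) for $(k_1,\ldots,k_p)$-core mining (threshold $k(v)=k_i$ for $v\in V_i$) on a $p$-partite graph $G=(V_1,\ldots,V_p,E)$ with $k_i\le |V_i|$ for all $1\le i\le p$, it converges in no more than $\sum_{i=1}^p |V_i| - \min_{1\le i\le p} k_i$ phases.
   Context: All graphs are finite simple undirected. A $p$-partite graph $G=(V_1,\ldots,V_p,E)$ has vertex set partitioned into disjoint sets $V_1,\ldots,V_p$ with no edges inside any $V_i$ (bipartite means $p=2$). Distributed peeling protocol with thresholds $k(v)$: each node $v$ keeps a counter $degree$, initialized to $\deg_G(v)$, and a status, initially active. Initially, if $degree<k(v)$, node $v$ sends an ''off'' message to each of its neighbors and becomes inactive. An active node, upon receiving a message, sets $degree=degree-1$; if then $degree<k(v)$, it sends an ''off'' message to each of its neighbors and becomes inactive. An inactive node remains inactive and ignores all incoming messages. Synchronous phase model: nodes operate in synchronized phases; in each phase, every node receives all messages sent by other nodes in the previous phase and, if applicable, sends off-messages to all its neighbors. The protocol converges at the phase after which no further node becomes inactive and no messages are sent. *)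

From mathcomp Require Import all_boot.
Set Implicit Arguments. Unset Strict Implicit. Unset Printing Implicit Defensive.

Definition simple_graph (T : finType) (e : rel T) := symmetric e /\ irreflexive e.

Definition ppartite (T : finType) (p : nat) (part : T -> 'I_p) (e : rel T) :=
  forall x y, e x y -> part x != part y.

(* minimum of k over 'I_p (the max is used only as neutral element; for p > 0
   this is exactly min_i k i; for p = 0 it is 0). *)
Definition maxval (p : nat) (k : 'I_p -> nat) : nat := \max_(i < p) k i.
Definition minval (p : nat) (k : 'I_p -> nat) : nat :=
  \big[minn/maxval k]_(i < p) k i.

Section Peeling.
Variables (T : finType) (e : rel T) (thr : T -> nat).

(* state of every node after a phase: its counter, its status (true = active),
   and whether it sends "off" messages (to all its neighbours) in that phase *)
Record pstate := PState { cnt : T -> nat; active : T -> bool; sending : T -> bool }.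

Definition deg (v : T) : nat := #|[set u | e v u]|.

Definition init_state : pstate :=
  PState deg (fun v => thr v <= deg v) (fun v => deg v < thr v).

Definition received (s : pstate) (v : T) : nat :=
  #|[set u | sending s u && e u v]|.

Definition step (s : pstate) : pstate :=
  PState (fun v => if active s v then cnt s v - received s v else cnt s v)
         (fun v => active s v && (thr v <= cnt s v - received s v))
         (fun v => active s v && (cnt s v - received s v < thr v)).

(* state after phase t (phase 0 = initialisation) *)
Definition run (t : nat) : pstate := iter t step init_state.

Definition converges_within (N : nat) : Prop :=
  forall t, N < t -> forall v,
    sending (run t) v = false /\ active (run t) v = active (run N) v.
End Peeling.

From mathcomp Require Import all_boot.
From mathcomp Require Import zify.

(* The protocol simulates sequential peeling: with B_0 = V and
   B_{t+1} = {v in B_t | v has at least k(v) neighbours in B_t},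
   a node is still active after phase t iff it lies in B_{t+1}, so the protocol
   has converged after phase N as soon as B_{N+2} = B_{N+1}.  Every round
   before stabilisation removes a node, hence |B_t| <= |V| - t, and a node v
   removed in round t+1 has k(v) neighbours in B_t besides itself, so
   k(v) + 1 <= |V| - t; this gives (i) and (iii).
   For (ii), a node removed in round M+2 forces a neighbour (on the other side)
   removed in round M+1, which forces a neighbour removed in round M.  The
   parts P, Q of B_M on the two sides then satisfy |P| >= k_2, |Q| >= k_1 with
   one inequality strict (otherwise the node removed in round M would be
   adjacent to all of Q), contradicting |P| + |Q| <= |V| - M. *)

Set Implicit Arguments. Unset Strict Implicit. Unset Printing Implicit Defensive.

Section Peeling.
Variables (T : finType) (e : rel T) (thr : T -> nat).

Definition nbhd (S : {set T}) (v : T) : {set T} := [set u in S | e v u].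

Definition peel (S : {set T}) : {set T} := [set v in S | thr v <= #|nbhd S v|].

Definition alive (t : nat) : {set T} := iter t peel setT.

Definition peeled (t : nat) (v : T) : bool := (v \in alive t) && (v \notin alive t.+1).

Lemma alive_S t v :
  (v \in alive t.+1) = (v \in alive t) && (thr v <= #|nbhd (alive t) v|).
Proof. by rewrite [alive _]/= inE. Qed.

Lemma in_nbhd S v u : (u \in nbhd S v) = (u \in S) && e v u.
Proof. by rewrite inE. Qed.

Lemma alive_subS t : alive t.+1 \subset alive t.
Proof. by apply/subsetP=> v; rewrite alive_S => /andP[]. Qed.

Lemma card_nbhd_subset (A B : {set T}) v : B \subset A ->
  #|nbhd B v| = #|nbhd A v| - #|nbhd A v :\: B|.
Proof.
move=> /subsetP sBA.
have -> : nbhd B v = nbhd A v :&: B.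
  apply/setP=> u; rewrite !inE.
  by case: (boolP (u \in B)) => [/sBA->|_]; rewrite ?andbT ?andbF.
by rewrite -(cardsID B (nbhd A v)) addnK.
Qed.

Lemma alive_fixed s : alive s.+1 = alive s -> forall t, s <= t -> alive t = alive s.
Proof.
move=> fix_s t /subnK <-; elim: (t - s) => [|d IHd] //.
by rewrite addSn [alive _]/= -/(alive _) IHd.
Qed.

Lemma card_alive_add s i : alive s.+1 != alive s -> i <= s.+1 -> #|alive i| + i <= #|T|.
Proof.
move=> move_s; elim: i => [|i IHi] lti; first by rewrite addn0 cardsT.
have move_i : alive i.+1 != alive i.
  apply: contra move_s => /eqP fix_i.
  by rewrite (alive_fixed fix_i (ltnW lti)) (alive_fixed fix_i lti).
have : #|alive i.+1| < #|alive i| by rewrite proper_card // properEneq move_i alive_subS.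
by have := IHi (ltnW lti); lia.
Qed.

Lemma alive_S_thr t v : v \in alive t.+1 -> thr v <= #|nbhd (alive t) v|.
Proof. by rewrite alive_S => /andP[]. Qed.

Lemma peeled_thr t v : peeled t v -> #|nbhd (alive t) v| < thr v.
Proof. by case/andP=> vt; rewrite alive_S vt ltnNge. Qed.

Lemma peeled_alive_neq t v : peeled t v -> alive t.+1 != alive t.
Proof. by case/andP=> vt vNt1; apply: contraNneq vNt1 => ->. Qed.

Lemma peeled_neighbour t v : peeled t.+1 v -> exists2 u, e v u & peeled t u.
Proof.
move=> peeled_v; have lt_thr := peeled_thr peeled_v.
have le_thr := alive_S_thr (proj1 (andP peeled_v)).
have : ~~ (nbhd (alive t) v \subset nbhd (alive t.+1) v).
  by apply/negP=> /subset_leq_card; rewrite leqNgt (leq_trans lt_thr le_thr).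
case/subsetPn=> u; rewrite !in_nbhd => /andP[ut evu] /nandP[uNt1|/negP//].
by exists u; rewrite // /peeled ut.
Qed.

Section SimpleGraph.
Hypotheses (e_sym : symmetric e) (e_irr : irreflexive e).

Lemma peeled_thr_bound t v : peeled t.+1 v -> thr v + t.+1 <= #|T|.
Proof.
move=> peeled_v; have vt1 := proj1 (andP peeled_v).
have le_thr := alive_S_thr vt1; have vt := subsetP (alive_subS t) v vt1.
have : #|v |: nbhd (alive t) v| <= #|alive t|.
  by apply/subset_leq_card/subsetP=> x; rewrite !inE => /orP[/eqP->|/andP[]].
rewrite cardsU1 inE e_irr andbF.
have := card_alive_add (peeled_alive_neq peeled_v) (leqW (leqnSn t)); lia.
Qed.

Lemma run_alive t v :
  [/\ active (run e thr t) v = (v \in alive t.+1),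
      sending (run e thr t) v = (v \in alive t) && (#|nbhd (alive t) v| < thr v) &
      (active (run e thr t) v -> cnt (run e thr t) v = #|nbhd (alive t) v|)].
Proof.
elim: t v => [|t IHt] v.
  have nbhdT : nbhd setT v = [set u | e v u] by apply/setP=> u; rewrite !inE.
  by rewrite alive_S /= /deg !inE nbhdT.
have received_alive : received e (run e thr t) v = #|nbhd (alive t) v :\: alive t.+1|.
  apply: eq_card => u; rewrite in_set in_setD in_nbhd; have [_ -> _] := IHt u.
  by rewrite alive_S e_sym ltnNge; case: (u \in alive t); rewrite //= andbC.
have [act_v _ cnt_v] := IHt v.
rewrite (alive_S t.+1) (card_nbhd_subset _ (alive_subS t)) -received_alive -act_v.
rewrite [run _ _ _]/= -/(run e thr t) /step /=.
by case: (active (run e thr t) v) cnt_v => // ->.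
Qed.

Lemma converges_of_alive_fixed N : alive N.+2 = alive N.+1 -> converges_within e thr N.
Proof.
move=> fix_N t ltNt v; have [act_t send_t _] := run_alive t v.
have [act_N _ _] := run_alive N v.
rewrite act_t act_N send_t !(alive_fixed fix_N) //; last exact: ltnW.
split=> //; apply/negbTE/nandP.
case: (boolP (v \in alive N.+1)) => [vN1|]; [right | by left].
by rewrite -leqNgt; move: vN1; rewrite -{1}fix_N alive_S => /andP[].
Qed.

Lemma converges_of_no_peeled N : (forall v, ~~ peeled N.+1 v) -> converges_within e thr N.
Proof.
move=> no_peel; apply: converges_of_alive_fixed; apply/eqP.
rewrite eqEsubset alive_subS; apply/subsetP=> v vN1.
by have := no_peel v; rewrite /peeled vN1 negbK.
Qed.

Lemma converges_of_thr_bound N :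
  (forall v, #|T| <= thr v + N) -> converges_within e thr N.
Proof.
move=> thr_big; apply: converges_of_no_peeled => v.
apply/negP=> /peeled_thr_bound; have := thr_big v; lia.
Qed.

Section Bipartite.
Variables (W : {set T}) (a b : nat).
Hypothesis thr_side : forall x, thr x = if x \in W then a else b.
Hypothesis e_bip : forall x y, e x y -> (x \in W) != (y \in W).

Lemma nbhd_in_side S x : x \in W -> nbhd S x \subset S :\: W.
Proof.
move=> xW; apply/subsetP=> y; rewrite in_nbhd inE => /andP[yS /e_bip].
by rewrite xW yS andbT; case: (y \in W).
Qed.

Lemma nbhd_notin_side S x : x \notin W -> nbhd S x \subset S :&: W.
Proof.
move=> xNW; apply/subsetP=> y; rewrite in_nbhd inE => /andP[yS /e_bip].
by rewrite (negbTE xNW) yS; case: (y \in W).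
Qed.

(* If both sides of [alive M] were at their thresholds, [v] would see all of
   the [W]-free side, each node of which would see all of the [W]-side,
   including [w]; so [w] would have enough neighbours to survive round [M]. *)
Lemma sides_not_tight M v w : v \in W -> v \in alive M.+2 -> w \in W -> peeled M w ->
  #|alive M :&: W| <= b -> #|alive M :\: W| <= a -> False.
Proof.
move=> vW vM2 wW peeled_w tightP tightQ.
have a_le := alive_S_thr vM2; rewrite thr_side vW in a_le.
have nbhd_v : nbhd (alive M.+1) v = alive M :\: W.
  apply/eqP; rewrite eqEcard (leq_trans tightQ a_le) andbT.
  apply: subset_trans (nbhd_in_side _ vW) _.
  exact/setSD/alive_subS.
have nbhd_q q : q \in alive M :\: W -> nbhd (alive M) q = alive M :&: W.
  move=> qQ; have qNW : q \notin W by move: qQ; rewrite inE => /andP[].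
  move: qQ; rewrite -nbhd_v in_nbhd => /andP[/alive_S_thr b_le _].
  rewrite thr_side (negbTE qNW) in b_le.
  by apply/eqP; rewrite eqEcard nbhd_notin_side //= (leq_trans tightP b_le).
have sub_w : alive M :\: W \subset nbhd (alive M) w.
  apply/subsetP=> q qQ; rewrite in_nbhd.
  have : w \in nbhd (alive M) q by rewrite nbhd_q // inE wW (proj1 (andP peeled_w)).
  by rewrite in_nbhd e_sym => /andP[_ ->]; move: qQ; rewrite inE => /andP[_ ->].
have := peeled_thr peeled_w; rewrite thr_side wW.
by have := subset_leq_card sub_w; rewrite nbhd_v in a_le; lia.
Qed.

Lemma no_late_peel_in_side v : v \in W -> ~~ peeled ((#|W| - b) + (#|~: W| - a)).+2 v.
Proof.
move=> vW; apply/negP; set M := _ + _ => peeled_v.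
have M_def : M = (#|W| - b) + (#|~: W| - a) by [].
have [u evu peeled_u] := peeled_neighbour peeled_v.
have uNW : u \notin W by have := e_bip evu; rewrite vW; case: (u \in W).
have [w euw peeled_w] := peeled_neighbour peeled_u.
have wW : w \in W by have := e_bip euw; rewrite (negbTE uNW); case: (w \in W).
have vM2 := proj1 (andP peeled_v); have uM1 := proj1 (andP peeled_u).
have a_le : a <= #|alive M :\: W|.
  have := alive_S_thr vM2; rewrite thr_side vW => /leq_trans; apply.
  exact/subset_leq_card/(subset_trans (nbhd_in_side _ vW))/setSD/alive_subS.
have b_le : b <= #|alive M :&: W|.
  have := alive_S_thr uM1; rewrite thr_side (negbTE uNW) => /leq_trans; apply.
  exact/subset_leq_card/nbhd_notin_side.
have := card_alive_add (peeled_alive_neq peeled_v) (leqW (leqW (leqnSn M))).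
have := cardsID W (alive M); have := cardsC W.
have : #|alive M :&: W| <= #|W| by apply/subset_leq_card/subsetIr.
have : #|alive M :\: W| <= #|~: W| by apply/subset_leq_card; rewrite setDE subsetIr.
case: (leqP #|alive M :&: W| b) => [tightP|]; last lia.
case: (leqP #|alive M :\: W| a) => [tightQ|]; last lia.
by have := sides_not_tight vW vM2 wW peeled_w tightP tightQ.
Qed.

End Bipartite.

Lemma converges_bipartite (W : {set T}) a b :
  (forall x, thr x = if x \in W then a else b) ->
  (forall x y, e x y -> (x \in W) != (y \in W)) ->
  converges_within e thr ((#|W| - b) + (#|~: W| - a) + 1).
Proof.
move=> thr_side e_bip; rewrite addn1; apply: converges_of_no_peeled => v.
have [vW|vNW] := boolP (v \in W); first exact: no_late_peel_in_side.
have := @no_late_peel_in_side (~: W) b a _ _ v.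
rewrite setCK addnC inE; apply=> //.
- by move=> x; rewrite inE thr_side; case: (x \in W).
- by move=> x y /e_bip; rewrite !inE; case: (x \in W); case: (y \in W).
Qed.

End SimpleGraph.
End Peeling.

Lemma minval_le (p : nat) (k : 'I_p -> nat) i : minval k <= k i.
Proof.
rewrite /minval; elim: (index_enum _) (mem_index_enum i) => // j r IHr.
rewrite inE big_cons => /orP[/eqP<-|/IHr]; first exact: geq_minl.
exact: leq_trans (geq_minr _ _).
Qed.

Lemma sum_card_parts (T : finType) (p : nat) (part : T -> 'I_p) :
  \sum_(i < p) #|[set v | part v == i]| = #|T|.
Proof.
rewrite -sum1_card (partition_big part xpredT) //=.
by apply: eq_bigr => i _; rewrite -sum1_card; apply: eq_bigl => v; rewrite inE.
Qed.

Theorem lemma2 :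
  (forall (T : finType) (e : rel T) (k : nat),
      simple_graph e -> k <= #|T| ->
      converges_within e (fun _ => k) (#|T| - k)) /\
  (forall (T : finType) (e : rel T) (V1 : {set T}) (k1 k2 : nat),
      simple_graph e ->
      (forall x y, e x y -> (x \in V1) != (y \in V1)) ->
      converges_within e (fun v => if v \in V1 then k1 else k2)
        ((#|V1| - k2) + (#|~: V1| - k1) + 1)) /\
  (forall (T : finType) (e : rel T) (p : nat) (part : T -> 'I_p) (k : 'I_p -> nat),
      simple_graph e -> ppartite part e ->
      (forall i, k i <= #|[set v | part v == i]|) ->
      converges_within e (fun v => k (part v))
        ((\sum_(i < p) #|[set v | part v == i]|) - minval k)).
Proof.
split; [|split].
- move=> T e k [e_sym e_irr] _.
  by apply: converges_of_thr_bound => // v; lia.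
- move=> T e V1 k1 k2 [e_sym _] e_bip.
  exact: converges_bipartite.
- move=> T e p part k [e_sym e_irr] _ _.
  rewrite sum_card_parts; apply: converges_of_thr_bound => // v.
  by have := minval_le k (part v); lia.
Qed.
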